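(* Let $\{f_i\}_{i=1}^k$ be a frame for $\mathcal{H}_n$. If $(p,q)$-surgery on $\{f_i\}_{i=1}^k$ is possible, then $(r,r-p+q)$-surgery on $\{f_i\}_{i=1}^k$ is possible for every $r=p+1,p+2,\dots,k$.
   Context: $\mathcal{H}_n$ is an $n$-dimensional real or complex Hilbert space. A sequence $\{h_i\}$ in $\mathcal{H}_n$ is a tight frame if there is $\lambda>0$ with $\sum_i|\langle f,h_i\rangle|^2=\lambda\|f\|^2$ for all $f\in\mathcal{H}_n$. For a frame $\{f_i\}_{i=1}^k$, $(p,q)$-surgery is possible if there exist $I\subseteq\{1,\dots,k\}$ with $|I|=p$ and vectors $g_1,\dots,g_q\in\mathcal{H}_n$ such that $\{f_i\}_{i\notin I}\cup\{g_j\}_{j=1}^q$ is a tight frame for $\mathcal{H}_n$. *)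

From HB Require Import structures.
From mathcomp Require Import all_boot all_order all_algebra.
From mathcomp Require Import complex.
From mathcomp Require Import reals.
Set Implicit Arguments. Unset Strict Implicit. Unset Printing Implicit Defensive.
Import Order.TTheory GRing.Theory Num.Theory.
Local Open Scope ring_scope.

(* H_n is modelled as K^n (row vectors 'rV[K]_n) with the standard inner
   product <x, y> = \sum_i x_i * conj (y_i); K = R (conj = id) in the real
   case, K = R[i] = complex R (conj = complex conjugation) in the complex case. *)
Section Frames.
Variables (K : numDomainType) (conj : K -> K) (n : nat).

Definition ip (x y : 'rV[K]_n) : K := \sum_(i < n) x 0 i * conj (y 0 i).
Definition normsq (x : 'rV[K]_n) : K := \sum_(i < n) `|x 0 i| ^+ 2.
Definition frame_energy (s : seq 'rV[K]_n) (x : 'rV[K]_n) : K :=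
  \sum_(h <- s) `|ip x h| ^+ 2.

Definition is_frame (s : seq 'rV[K]_n) : Prop :=
  exists A B : K, 0 < A /\ A <= B /\
    forall x, A * normsq x <= frame_energy s x /\ frame_energy s x <= B * normsq x.

Definition is_tight_frame (s : seq 'rV[K]_n) : Prop :=
  exists lambda : K, 0 < lambda /\ forall x, frame_energy s x = lambda * normsq x.

Definition surgery_possible (k : nat) (f : 'I_k -> 'rV[K]_n) (p q : nat) : Prop :=
  exists I : {set 'I_k}, #|I| = p /\
    exists g : 'I_q -> 'rV[K]_n,
      is_tight_frame ([seq f i | i in ~: I] ++ [seq g j | j : 'I_q]).
End Frames.

From HB Require Import structures.
From mathcomp Require Import all_boot all_order all_algebra.
From mathcomp Require Import complex.
From mathcomp Require Import reals.
Set Implicit Arguments. Unset Strict Implicit. Unset Printing Implicit Defensive.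
Import Order.TTheory GRing.Theory Num.Theory.
Local Open Scope ring_scope.

(* Tightness depends only on the multiset of vectors, since the frame energy is
   a sum over the system. So if removing the f_i with i in I and adding
   g_1, ..., g_q gives a tight frame, one may remove r - p further vectors f_i
   (i outside I) and add them straight back as new vectors: the result is a
   permutation of the previous tight frame. *)

Lemma exists_subset_card (T : finType) (A : {set T}) (m : nat) :
  (m <= #|A|)%N -> exists2 D : {set T}, D \subset A & #|D| = m.
Proof.
case/card_geqP=> s [uniq_s size_s sA].
exists [set x in s]; first by apply/subsetP=> x; rewrite inE => /sA.
by rewrite cardsE (card_uniqP uniq_s).
Qed.

Lemma perm_enum_setD_cat (T : finType) (A D : {set T}) :
  D \subset A -> perm_eq (enum (A :\: D) ++ enum D) (enum A).
Proof.
move=> /subsetP sDA; apply: uniq_perm; rewrite ?enum_uniq //.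
- rewrite cat_uniq !enum_uniq andbT /=; apply/hasPn=> x.
  by rewrite !mem_enum inE => ->.
- move=> x; rewrite mem_cat !mem_enum inE.
  by case: (boolP (x \in D)) => [/sDA -> | _]; rewrite ?orbT ?orbF.
Qed.

Lemma exists_ord_indexing (T : Type) (s : seq T) (m : nat) :
  size s = m -> exists g : 'I_m -> T, [seq g j | j : 'I_m] = s.
Proof.
move=> /eqP size_s; exists (tnth (Tuple size_s)).
by rewrite -[RHS](map_tnth_enum (Tuple size_s)).
Qed.

Section Surgery.
Variables (K : numDomainType) (conj : K -> K) (n : nat).

Lemma frame_energy_perm (s t : seq 'rV[K]_n) :
  perm_eq s t -> frame_energy conj s =1 frame_energy conj t.
Proof. by move=> st x; apply: perm_big. Qed.

Lemma is_tight_frame_perm (s t : seq 'rV[K]_n) :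
  perm_eq s t -> is_tight_frame conj s -> is_tight_frame conj t.
Proof.
move=> st [lam [lam_gt0 tight_s]]; exists lam; split=> // x.
by rewrite -(frame_energy_perm st) tight_s.
Qed.

Lemma surgery_possible_extend (k : nat) (f : 'I_k -> 'rV[K]_n) (p q m : nat) :
  surgery_possible conj f p q -> (m <= k - p)%N ->
  surgery_possible conj f (p + m) (m + q).
Proof.
move=> [I [card_I [g tight]]] le_m.
have [D sDCI card_D] : exists2 D : {set 'I_k}, D \subset ~: I & #|D| = m.
  by apply: exists_subset_card; rewrite cardsCs setCK card_ord card_I.
have card_ID : #|I :|: D| = (p + m)%N.
  rewrite cardsU setIC disjoint_setI0 ?cards0 ?subn0 ?card_I ?card_D //.
  by rewrite disjoints_subset.
exists (I :|: D); split=> //.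
have [g' enum_g'] : exists g' : 'I_(m + q) -> 'rV[K]_n,
    [seq g' j | j : 'I_(m + q)] = [seq f i | i in D] ++ [seq g j | j : 'I_q].
  apply: exists_ord_indexing.
  by rewrite size_cat !size_map -cardE card_D -enumT size_enum_ord.
exists g'; rewrite enum_g'; apply: is_tight_frame_perm tight.
rewrite catA perm_cat2r setCU -setDE -map_cat perm_sym.
exact: perm_map (perm_enum_setD_cat sDCI).
Qed.

Lemma surgery_possible_remove_more (k : nat) (f : 'I_k -> 'rV[K]_n) (p q r : nat) :
  surgery_possible conj f p q -> (p < r <= k)%N ->
  surgery_possible conj f r (r - p + q).
Proof.
move=> surgery /andP[lt_pr le_rk].
rewrite -{1}(subnKC (ltnW lt_pr)).
exact: surgery_possible_extend surgery (leq_sub2r p le_rk).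
Qed.

End Surgery.

Theorem theorem3p2 :
  (forall (R : realType) (n k : nat) (f : 'I_k -> 'rV[R]_n) (p q : nat),
     is_frame id [seq f i | i : 'I_k] ->
     surgery_possible id f p q ->
     forall r : nat, (p < r <= k)%N -> surgery_possible id f r (r - p + q)%N)
  /\
  (forall (R : realType) (n k : nat) (f : 'I_k -> 'rV[R[i]]_n) (p q : nat),
     is_frame Num.conj [seq f i | i : 'I_k] ->
     surgery_possible Num.conj f p q ->
     forall r : nat, (p < r <= k)%N ->
       surgery_possible Num.conj f r (r - p + q)%N).
Proof.
by split=> R n k f p q _ surgery r; apply: surgery_possible_remove_more.
Qed.
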